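(* Under the standing setup, let $\hat V_\tau$ be the extended heuristic on all of $\mathbb R^D$. Then: (i) for every $t\in\{0,\dots,T-2\}$, $l\in\{0,\dots,k\}$, $s\in\mathbb R^D$ and $a\in\mathcal A'_{l,t}$, writing $(s_a,l_a)=F^+_{\tau,t}((s,l),a)$, $$\hat V_\tau(s,l,t)\ge R(s,a)+\hat V_\tau(s_a,l_a,t+1);$$ (ii) for every $l\in\{0,\dots,k\}$, $s\in\mathbb R^D$ and $a\in\mathcal A'_{l,T-1}$, $\hat V_\tau(s,l,T-1)\ge R(s,a)+\hat V_\tau(\cdot,k,T)=R(s,a)$. In other words, $\hat V_\tau$ is a consistent heuristic for the search graph whose nodes are $(s,l,t)$ and whose edges are labeled by $a\in\mathcal A'_{l,t}$, carry reward $R(s,a)$, and lead to $(s_a,l_a,t+1)$ (or to a goal node at time $T$ when $t=T-1$).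
   Context: Standing setup: state space $\mathcal S=\mathbb R^D$, finite action set $\mathcal A$, horizon $T\ge2$, noise space $\mathcal U$. A transition mechanism $g_S:\mathcal S\times\mathcal A\times\mathcal U\to\mathcal S$ is bijective in its last argument, with inverse $g_S^{-1}:\mathcal S\times\mathcal A\times\mathcal S\to\mathcal U$ satisfying $u=g_S^{-1}(s,a,s')$ whenever $s'=g_S(s,a,u)$. Reward $R:\mathcal S\times\mathcal A\to\mathbb R$. Lipschitz assumption: for each $a\in\mathcal A,u\in\mathcal U$ there is $K_{a,u}\ge0$ with $\|g_S(s,a,u)-g_S(s',a,u)\|\le K_{a,u}\|s-s'\|$, and for each $a$ there is $C_a\ge0$ with $|R(s,a)-R(s',a)|\le C_a\|s-s'\|$, for all $s,s'\in\mathcal S$ (Euclidean norm). An observed episode $\tau$ consists of states $s_0,\dots,s_{T-1}$ and actions $a_0,\dots,a_{T-1}$; put $u_t=g_S^{-1}(s_t,a_t,s_{t+1})$ for $t=0,\dots,T-2$. Fix a budget $k\in\{0,\dots,T\}$. For $t\le T-2$ define $F^+_{\tau,t}((s,l),a)=\big(g_S(s,a,u_t),\,l+\mathbf 1[a\ne a_t]\big)$. Constants: $K_{u_t}=\max_{a}K_{a,u_t}$, $C=\max_a C_a$, $L_{T-1}=C$, $L_t=C+L_{t+1}K_{u_t}$ for $t\le T-2$. For $l\in\{0,\dots,k\}$ and time $t$, let $\mathcal A'_{l,t}=\{a_t\}$ if $l=k$ and $\mathcal A'_{l,t}=\mathcal A$ if $l<k$. Let $\mathcal S_\dagger\subset\mathbb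 R^D$ be a finite nonempty anchor set. Anchor recursion (for $s\in\mathcal S_\dagger$): $\hat V_\tau(s,l,T-1)=\max_{a\in\mathcal A}R(s,a)$ for $l<k$ and $\hat V_\tau(s,k,T-1)=R(s,a_{T-1})$; for $t=T-2,\dots,0$, $\hat V_\tau(s,l,t)=\max_{a\in\mathcal A'_{l,t}}\{R(s,a)+\min_{s_\dagger\in\mathcal S_\dagger}\{\hat V_\tau(s_\dagger,l_a,t+1)+L_{t+1}\|s_\dagger-s_a\|\}\}$ with $(s_a,l_a)=F^+_{\tau,t}((s,l),a)$. Extended heuristic (for all $s\in\mathbb R^D$): $\hat V_\tau(s,l,T)=0$; $\hat V_\tau(s,l,T-1)=\max_{a\in\mathcal A'_{l,T-1}}R(s,a)$; and for $t\le T-2$, $\hat V_\tau(s,l,t)=\max_{a\in\mathcal A'_{l,t}}\{R(s,a)+\min_{s_\dagger\in\mathcal S_\dagger}\{\hat V_\tau(s_\dagger,l_a,t+1)+L_{t+1}\|s_\dagger-s_a\|\}\}$, where the values $\hat V_\tau(s_\dagger,\cdot,t+1)$ at anchors are those of the anchor recursion (which coincide with the extended formula on anchors). *)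

From HB Require Import structures.
From mathcomp Require Import all_boot all_order all_algebra.
From mathcomp Require Import reals.
Set Implicit Arguments. Unset Strict Implicit. Unset Printing Implicit Defensive.
Import Order.TTheory GRing.Theory Num.Theory.
Local Open Scope ring_scope.

Definition enorm (R : realType) (D : nat) (x : 'rV[R]_D) : R :=
  Num.sqrt (\sum_(i < D) (x ord0 i) ^+ 2).

Section Heuristic.
Variables (R : realType) (D : nat) (A : finType) (U : Type).
Variable (T : nat).
Variable (g : 'rV[R]_D -> A -> U -> 'rV[R]_D).
Variable (ginv : 'rV[R]_D -> A -> 'rV[R]_D -> U).
Variable (Rw : 'rV[R]_D -> A -> R).
Variable (K : A -> U -> R) (C : A -> R).
Variable (st : nat -> 'rV[R]_D) (acts : nat -> A).
Variable (k : nat).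
Variable (anchors : seq 'rV[R]_D).

Definition noise (t : nat) : U := ginv (st t) (acts t) (st t.+1).

Definition Fplus (t : nat) (s : 'rV[R]_D) (l : nat) (a : A) : 'rV[R]_D * nat :=
  (g s a (noise t), l + (a != acts t)).

(* K_{u_t} = max_a K_{a,u_t}, C = max_a C_a (the K, C are nonnegative) *)
Definition Ku (t : nat) : R := \big[Num.max/0]_(a : A) K a (noise t).
Definition Cmax : R := \big[Num.max/0]_(a : A) C a.

(* Laux n = L_{T-1-n}: L_{T-1} = C, L_t = C + L_{t+1} K_{u_t} *)
Fixpoint Laux (n : nat) : R :=
  match n with
  | 0 => Cmax
  | n'.+1 => Cmax + Laux n' * Ku (T - 2 - n')
  end.
Definition L (t : nat) : R := Laux (T - 1 - t).

Definition inAprime (l t : nat) (a : A) : bool :=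
  if l == k then a == acts t else true.

Definition maxAprime (l t : nat) (f : A -> R) : R :=
  if l == k then f (acts t) else \big[Num.max/f (acts t)]_(a : A) f a.

Definition minAnchors (f : 'rV[R]_D -> R) : R :=
  \big[Num.min/f (head 0 anchors)]_(x <- anchors) f x.

(* Vaux n s l = hat V_tau(s, l, T-1-n), the extended heuristic (which
   coincides with the anchor recursion on anchors) *)
Fixpoint Vaux (n : nat) (s : 'rV[R]_D) (l : nat) : R :=
  match n with
  | 0 => maxAprime l (T - 1) (fun a => Rw s a)
  | n'.+1 =>
      let t := (T - 2 - n')%N in
      maxAprime l t (fun a =>
        Rw s a + minAnchors (fun sd =>
          Vaux n' sd (Fplus t s l a).2 + L t.+1 * enorm (sd - (Fplus t s l a).1)))
  end.

(* hat V_tau(s, l, t); equal to 0 at t = T (and, irrelevantly, for t > T) *)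
Definition Vhat (s : 'rV[R]_D) (l t : nat) : R :=
  if (t < T)%N then Vaux (T - 1 - t) s l else 0.

End Heuristic.

From Pilot Require Import Defs.
From HB Require Import structures.
From mathcomp Require Import all_boot all_order all_algebra.
From mathcomp Require Import reals ring lra zify.
Import Order.TTheory GRing.Theory Num.Theory.
Local Open Scope ring_scope.

(* The heart of the argument is a one-sided Lipschitz estimate: for every
   time t <= T-1 and budget l, the map s |-> hat V(s, l, t) is L_t-Lipschitz,
      hat V(s, l, t) <= hat V(s', l, t) + L_t ||s' - s||.
   It is proved by induction on the number T-1-t of remaining steps: the
   reward contributes C ||s' - s||, and moving the start state moves every
   successor g_S(s, a, u_t) by at most K_{u_t} ||s' - s||, which the anchor
   term L_{t+1} ||s_dagger - s_a|| converts into L_{t+1} K_{u_t} ||s' - s||;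
   the recursion L_t = C + L_{t+1} K_{u_t} is exactly what closes the
   induction.  Consistency (i) follows at once: hat V(s, l, t) dominates the
   value of the edge a, i.e. R(s, a) + min over anchors of
   hat V(s_dagger, l_a, t+1) + L_{t+1} ||s_dagger - s_a||, and each anchor
   term is >= hat V(s_a, l_a, t+1) by the Lipschitz estimate at t+1.
   Statement (ii) only unfolds the definition at t = T-1 and t = T. *)

Section EuclideanNorm.
Context {R : realType}.

(* Cauchy-Schwarz, from Lagrange's identity
   sum_{i,j} (f_i g_j - f_j g_i)^2 = 2 (|f|^2 |g|^2 - <f, g>^2). *)
Lemma cauchy_schwarz_sum (n : nat) (f g : 'I_n -> R) :
  (\sum_i f i * g i) ^+ 2 <= (\sum_i f i ^+ 2) * (\sum_i g i ^+ 2).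
Proof.
have lagrange : \sum_i \sum_j (f i * g j - f j * g i) ^+ 2 =
    2 * ((\sum_i f i ^+ 2) * (\sum_i g i ^+ 2) - (\sum_i f i * g i) ^+ 2).
  have expand i j : (f i * g j - f j * g i) ^+ 2 =
      f i ^+ 2 * g j ^+ 2 + g i ^+ 2 * f j ^+ 2 - 2 * ((f i * g i) * (f j * g j)).
    by rewrite !expr2; ring.
  under eq_bigr => i _ do under eq_bigr => j _ do rewrite expand.
  under eq_bigr => i _ do rewrite sumrB big_split /= -!mulr_sumr.
  rewrite sumrB big_split /= -!mulr_suml -mulr_sumr -mulr_suml.
  by rewrite [X in _ = 2 * (_ - X)]expr2; ring.
have : 0 <= \sum_i \sum_j (f i * g j - f j * g i) ^+ 2.
  by apply: sumr_ge0 => i _; apply: sumr_ge0 => j _; apply: sqr_ge0.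
by rewrite lagrange pmulr_rge0 // subr_ge0.
Qed.

Lemma enorm_ge0 (n : nat) (x : 'rV[R]_n) : 0 <= enorm x.
Proof. exact: sqrtr_ge0. Qed.

Lemma enorm_triangle {n : nat} (u v : 'rV[R]_n) :
  enorm (u + v) <= enorm u + enorm v.
Proof.
rewrite /enorm; set su := \sum_(i < n) u ord0 i ^+ 2; set sv := \sum_(i < n) v ord0 i ^+ 2.
have su0 : 0 <= su by apply: sumr_ge0 => i _; apply: sqr_ge0.
have sv0 : 0 <= sv by apply: sumr_ge0 => i _; apply: sqr_ge0.
have rhs0 : 0 <= Num.sqrt su + Num.sqrt sv by rewrite addr_ge0 ?sqrtr_ge0.
have expand : \sum_(i < n) (u + v) ord0 i ^+ 2 =
    su + 2 * \sum_(i < n) u ord0 i * v ord0 i + sv.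
  rewrite mulr_sumr -!big_split /=; apply: eq_bigr => i _; rewrite mxE; ring.
have dot_le : \sum_(i < n) u ord0 i * v ord0 i <= Num.sqrt su * Num.sqrt sv.
  rewrite -sqrtrM //; apply: le_trans (ler_norm _) _.
  by rewrite -sqrtr_sqr ler_sqrt ?mulr_ge0 //; apply: cauchy_schwarz_sum.
rewrite -(ger0_norm rhs0) -sqrtr_sqr ler_sqrt ?sqr_ge0 //.
by rewrite expand sqrrD !sqr_sqrtr //; lra.
Qed.

End EuclideanNorm.

Section Consistency.
Variables (R : realType) (D : nat) (A : finType) (U : Type) (T : nat)
  (g : 'rV[R]_D -> A -> U -> 'rV[R]_D) (ginv : 'rV[R]_D -> A -> 'rV[R]_D -> U)
  (Rw : 'rV[R]_D -> A -> R) (K : A -> U -> R) (C : A -> R)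
  (st : nat -> 'rV[R]_D) (acts : nat -> A) (k : nat) (anchors : seq 'rV[R]_D).
Hypothesis g_lipschitz :
  forall a u s s', enorm (g s a u - g s' a u) <= K a u * enorm (s - s').
Hypothesis Rw_lipschitz :
  forall a s s', `|Rw s a - Rw s' a| <= C a * enorm (s - s').
Hypothesis anchors_nonempty : anchors != [::].

Local Notation Vaux := (Vaux T g ginv Rw K C st acts k anchors).
Local Notation Vhat := (Vhat T g ginv Rw K C st acts k anchors).
Local Notation Laux := (Laux T ginv K C st acts).
Local Notation Ku := (Ku ginv K st acts).
Local Notation Fplus := (Fplus g ginv st acts).
Local Notation maxAprime := (maxAprime acts k).
Local Notation minAnchors := (minAnchors anchors).

Lemma maxAprime_ge (l t : nat) (F : A -> R) (a : A) :
  inAprime acts k l t a -> F a <= maxAprime l t F.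
Proof.
by rewrite /inAprime /maxAprime; case: (l == k) => [/eqP -> //|_]; apply: le_bigmax.
Qed.

Lemma maxAprime_le_shift (l t : nat) (F G : A -> R) (c : R) :
  (forall a, F a <= G a + c) -> maxAprime l t F <= maxAprime l t G + c.
Proof.
move=> FG; rewrite /maxAprime; case: (l == k) => //.
have G_le a : G a + c <= \big[Num.max/G (acts t)]_(b : A) G b + c.
  by rewrite lerD2r; apply: le_bigmax.
by apply: bigmax_le => [|a _]; apply: le_trans (FG _) (G_le _).
Qed.

Lemma minAnchors_ge (F : 'rV[R]_D -> R) (c : R) :
  (forall sd, c <= F sd) -> c <= minAnchors F.
Proof. by move=> cF; apply: le_bigmin. Qed.

Lemma minAnchors_le_shift (F G : 'rV[R]_D -> R) (c : R) :
  (forall sd, F sd <= G sd + c) -> minAnchors F <= minAnchors G + c.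
Proof.
move=> FG; rewrite -lerBlDr.
have min_le sd : sd \in anchors -> minAnchors F - c <= G sd.
  by move=> sd_in; rewrite lerBlDr; apply: le_trans (FG sd); apply: ge_bigmin_seq.
have head_in : head 0 anchors \in anchors.
  by case: anchors anchors_nonempty => // x r _; apply: mem_head.
rewrite [minAnchors G]/Defs.minAnchors big_seq.
by apply: le_bigmin => [|sd /= sd_in]; apply: min_le.
Qed.

(* C = max_a C_a is nonnegative (the max is taken starting from 0). *)
Lemma Cmax_ge0 : 0 <= Cmax C.
Proof. exact: bigmax_ge_id. Qed.

Lemma Laux_ge0 (n : nat) : 0 <= Laux n.
Proof.
elim: n => [|n IHn] /=; first exact: Cmax_ge0.
by rewrite addr_ge0 ?Cmax_ge0 // mulr_ge0 //; apply: bigmax_ge_id.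
Qed.

Lemma Rw_le_shift (a : A) (s s' : 'rV[R]_D) :
  Rw s a <= Rw s' a + Cmax C * enorm (s' - s).
Proof.
have := Rw_lipschitz a s' s; rewrite distrC => lip.
have C_le : C a * enorm (s' - s) <= Cmax C * enorm (s' - s).
  by rewrite ler_wpM2r ?enorm_ge0 //; apply: le_bigmax.
have := ler_norm (Rw s a - Rw s' a); lra.
Qed.

Lemma step_dist_le_shift (t : nat) (a : A) (s s' sd : 'rV[R]_D) :
  enorm (sd - g s a (noise ginv st acts t)) <=
  enorm (sd - g s' a (noise ginv st acts t)) + Ku t * enorm (s' - s).
Proof.
set u := noise ginv st acts t.
have tri := enorm_triangle (sd - g s' a u) (g s' a u - g s a u).
rewrite addrA subrK in tri; apply: le_trans tri _; rewrite lerD2l.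
apply: le_trans (g_lipschitz a u s' s) _.
by rewrite ler_wpM2r ?enorm_ge0 //; apply: le_bigmax.
Qed.

Lemma L_succ (t : nat) : L T ginv K C st acts t.+1 = Laux (T - 2 - t).
Proof. by rewrite /L; congr Laux; lia. Qed.

Lemma Vaux_le_shift (n : nat) (s s' : 'rV[R]_D) (l : nat) : (n <= T - 2)%N ->
  Vaux n s l <= Vaux n s' l + Laux n * enorm (s' - s).
Proof.
case: n => [|n] le_n /=; first by apply: maxAprime_le_shift => a; apply: Rw_le_shift.
rewrite L_succ (_ : (T - 2 - (T - 2 - n))%N = n); last by lia.
set t := (T - 2 - n)%N; set e := enorm (s' - s).
have Ln0 := Laux_ge0 n.
apply: maxAprime_le_shift => a.
have anchor_term sd :
    Vaux n sd (Fplus t s l a).2 + Laux n * enorm (sd - (Fplus t s l a).1) <=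
    Vaux n sd (Fplus t s' l a).2 + Laux n * enorm (sd - (Fplus t s' l a).1)
      + Laux n * Ku t * e.
  rewrite -addrA lerD2l -mulrA -mulrDr ler_wpM2l //.
  exact: step_dist_le_shift.
have := minAnchors_le_shift _ _ _ anchor_term; have := Rw_le_shift a s s'.
by rewrite /= -/e; lra.
Qed.

Lemma Vhat_unfold (t : nat) (s : 'rV[R]_D) (l : nat) :
  (2 <= T)%N -> (t <= T - 2)%N ->
  Vhat s l t = maxAprime l t (fun a => Rw s a + minAnchors (fun sd =>
    Vhat sd (Fplus t s l a).2 t.+1
    + L T ginv K C st acts t.+1 * enorm (sd - (Fplus t s l a).1))).
Proof.
move=> le2T le_t.
have [lt_t lt_t1] : (t < T)%N /\ (t.+1 < T)%N by lia.
rewrite /Vhat lt_t lt_t1 (_ : (T - 1 - t.+1)%N = (T - 2 - t)%N); last by lia.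
rewrite (_ : (T - 1 - t)%N = (T - 2 - t).+1); last by lia.
by rewrite /= (_ : (T - 2 - (T - 2 - t))%N = t); last by lia.
Qed.

Lemma Vhat_consistent_step (t l : nat) (s : 'rV[R]_D) (a : A) :
  (2 <= T)%N -> (t <= T - 2)%N -> inAprime acts k l t a ->
  Rw s a + Vhat (Fplus t s l a).1 (Fplus t s l a).2 t.+1 <= Vhat s l t.
Proof.
move=> le2T le_t adm; rewrite [Vhat s l t]Vhat_unfold //.
apply: le_trans (maxAprime_ge _ _ _ _ adm); rewrite lerD2l.
apply: minAnchors_ge => sd.
have lt_t1 : (t.+1 < T)%N by lia.
rewrite /Vhat lt_t1 (_ : (T - 1 - t.+1)%N = (T - 2 - t)%N); last by lia.
by rewrite L_succ; apply: Vaux_le_shift; lia.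
Qed.

Lemma Vhat_consistent_last (l : nat) (s : 'rV[R]_D) (a : A) :
  (1 <= T)%N -> inAprime acts k l (T - 1) a ->
  Rw s a + Vhat s k T <= Vhat s l (T - 1) /\ Rw s a + Vhat s k T = Rw s a.
Proof.
move=> le1T adm; rewrite /Vhat ltnn addr0 ifT; last by lia.
by rewrite subnn; split => //; apply: maxAprime_ge.
Qed.

End Consistency.

Theorem theorem2 (R : realType) (D : nat) (A : finType) (U : Type) (T : nat)
    (g : 'rV[R]_D -> A -> U -> 'rV[R]_D) (ginv : 'rV[R]_D -> A -> 'rV[R]_D -> U)
    (Rw : 'rV[R]_D -> A -> R) (K : A -> U -> R) (C : A -> R)
    (st : nat -> 'rV[R]_D) (acts : nat -> A) (k : nat) (anchors : seq 'rV[R]_D) :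
  (2 <= T)%N ->
  (k <= T)%N ->
  (* g_S is bijective in its last argument with inverse ginv *)
  (forall s a u, ginv s a (g s a u) = u) ->
  (forall s a s', g s a (ginv s a s') = s') ->
  (* Lipschitz assumptions *)
  (forall a u, 0 <= K a u) ->
  (forall a u s s', enorm (g s a u - g s' a u) <= K a u * enorm (s - s')) ->
  (forall a, 0 <= C a) ->
  (forall a s s', `|Rw s a - Rw s' a| <= C a * enorm (s - s')) ->
  (* finite nonempty anchor set *)
  anchors != [::] ->
  let V := Vhat T g ginv Rw K C st acts k anchors in
  (* (i) *)
  (forall (t l : nat) (s : 'rV[R]_D) (a : A),
      (t <= T - 2)%N -> (l <= k)%N -> inAprime acts k l t a ->
      let sa := (Fplus g ginv st acts t s l a).1 in
      let la := (Fplus g ginv st acts t s l a).2 in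
      Rw s a + V sa la t.+1 <= V s l t)
  /\
  (* (ii) *)
  (forall (l : nat) (s : 'rV[R]_D) (a : A),
      (l <= k)%N -> inAprime acts k l (T - 1)%N a ->
      Rw s a + V s k T <= V s l (T - 1)%N /\ Rw s a + V s k T = Rw s a).
Proof.
move=> le2T _ _ _ _ g_lip _ Rw_lip anchors_ne V; split.
- move=> t l s a le_t _ adm.
  exact: Vhat_consistent_step g_lip Rw_lip anchors_ne _ _ _ _ le2T le_t adm.
- move=> l s a _ adm.
  exact: Vhat_consistent_last _ _ _ (ltnW le2T) adm.
Qed.
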